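(* Let $\mathscr{V}\subseteq\mathfrak{B}(\mathcal{H})$ be a linear subspace with ${\rm alg}(\mathscr{V})=\mathfrak{B}(\mathcal{H})$, and let $\rho$ be a positive definite operator. Then $\rho\sim{\rm alg}(\mathcal{D}_\rho^{-1}(\mathscr{V}))$ if and only if ${\rm alg}(\mathcal{D}_\rho^{-1}(\mathscr{V}))=\mathfrak{B}(\mathcal{H})$.
   Context: $\mathcal{H}$ finite-dimensional complex Hilbert space, $\mathfrak{B}(\mathcal{H})$ its linear operators. A $*$-algebra is a linear subspace of $\mathfrak{B}(\mathcal{H})$ closed under products and adjoints; ${\rm alg}(\mathcal{S})$ is the smallest $*$-algebra containing $\mathcal{S}$. $\mathcal{D}_\rho^{-1}(X)=\rho^{-1/2}X\rho^{-1/2}$. A $*$-algebra $\mathscr{A}$ has a Wedderburn decomposition: unitary $U$ and orthogonal decomposition $\mathcal{H}\cong\bigoplus_l\mathcal{H}_{S,l}\otimes\mathcal{H}_{F,l}\oplus\mathcal{H}_R$ with $\mathscr{A}=U(\bigoplus_l\mathfrak{B}(\mathcal{H}_{S,l})\otimes I_{F,l}\oplus 0_R)U^\dagger$. Compatibility: $\rho\sim\mathscr{A}$ if for some such decomposition $\rho=U(\bigoplus_l\rho_{S,l}\otimes\tau_{F,l}\oplus 0_R)U^\dagger$ with $\rho_{S,l}\in\mathfrak{B}(\mathcal{H}_{S,l})$, $\tau_{F,l}\in\mathfrak{B}(\mathcal{H}_{F,l})$. *)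

(* Operators on the n-dimensional complex Hilbert space C^n
   are n x n matrices over C := R[i] (the complex numbers over a real type R). *)
From HB Require Import structures.
From mathcomp Require Import all_boot all_order all_algebra.
From mathcomp Require Import reals.
From mathcomp.real_closed Require Import complex mxtens.
Set Implicit Arguments. Unset Strict Implicit. Unset Printing Implicit Defensive.
Import Order.TTheory GRing.Theory Num.Theory.
Local Open Scope ring_scope.

Section Defs.
Variable C : numClosedFieldType.
Variable n : nat.
Local Notation M := 'M[C]_n.

Definition adjmx (A : M) : M := map_mx Num.conj A^T.

Definition unitarymx (U : M) : Prop := U *m adjmx U = 1%:M /\ adjmx U *m U = 1%:M.

Definition posdef (A : M) : Prop :=
  adjmx A = A /\
  forall v : 'cV[C]_n, v != 0 -> 0 < ((map_mx Num.conj v^T) *m A *m v) 0 0.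

Definition mxset := M -> Prop.

Definition is_subspace (V : mxset) : Prop :=
  V 0 /\ (forall A B, V A -> V B -> V (A + B)) /\ (forall (c : C) A, V A -> V (c *: A)).

Definition is_star_alg (S : mxset) : Prop :=
  is_subspace S /\ (forall A B, S A -> S B -> S (A *m B)) /\ (forall A, S A -> S (adjmx A)).

Definition alg (S : mxset) : mxset :=
  fun A => forall T : mxset, is_star_alg T -> (forall B, S B -> T B) -> T A.

Definition is_full (S : mxset) : Prop := forall A : M, S A.

(* D_rho^{-1}(V) = rho^{-1/2} V rho^{-1/2}, with sq = rho^{-1/2} *)
Definition Dinv (sq : M) (V : mxset) : mxset :=
  fun A => exists2 X, V X & A = sq *m X *m sq.

(* Block operator  U ( (+)_l  B_l (x) T_l  (+)  0_R ) U^dagger  where the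
   orthogonal decomposition H = (+)_l H_{S,l} (x) H_{F,l} (+) H_R has
   dim H_{S,l} = s l, dim H_{F,l} = f l, dim H_R = r, and E records
   \sum_l s_l f_l + r = n. *)
Definition wblock (k : nat) (s f : 'I_k -> nat) (r : nat)
  (E : (\sum_(l < k) s l * f l + r = n)%N) (U : M)
  (B : forall l, 'M[C]_(s l)) (T : forall l, 'M[C]_(f l)) : M :=
  U *m castmx (E, E)
     (block_mx (mxdiag (fun l => B l *t T l)) 0 0 (0 : 'M[C]_r)) *m adjmx U.

(* Wedderburn decomposition data (k,s,f,r,E,U) for the *-algebra A:
   A = U ( (+)_l B(H_{S,l}) (x) I_{F,l} (+) 0_R ) U^dagger *)
Definition wedderburn_for (A : mxset) (k : nat) (s f : 'I_k -> nat) (r : nat)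
  (E : (\sum_(l < k) s l * f l + r = n)%N) (U : M) : Prop :=
  unitarymx U /\
  forall X : M, A X <-> exists B : forall l, 'M[C]_(s l),
      X = wblock E U B (fun l => 1%:M).

Definition compatible (rho : M) (A : mxset) : Prop :=
  exists (k : nat) (s f : 'I_k -> nat) (r : nat)
         (E : (\sum_(l < k) s l * f l + r = n)%N) (U : M),
    wedderburn_for A E U /\
    exists (rS : forall l, 'M[C]_(s l)) (tF : forall l, 'M[C]_(f l)),
      rho = wblock E U rS tF.

End Defs.

(* If A = B(H), the trivial Wedderburn decomposition (one block,
   H_S = H, H_F = C, no remainder) exhibits every operator, rho included,
   in block form.  Conversely, the key fact is that the commutant of
   {A, rho} is trivial: an operator Z commuting with A and rho commutes
   with rho^{-1} = sq^2, hence with its positive square root sq (uniqueness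
   of solutions of the Sylvester equation P D + D P = 0 for positive
   definite P); thus Z commutes with every X in V and its adjoint, hence
   with the *-algebra alg V = B(H), so Z is scalar.  In a compatible
   decomposition every block operator  U (1 (x) c_l (+) d) U^dagger  with
   c_l commuting with the factor tau_{F,l} of rho commutes with A and rho,
   so must be scalar; this forces the remainder to vanish (rho != 0),
   every nonzero block to have H_F = C, and at most one nonzero block.
   Such a decomposition represents all of B(H). *)
From Pilot Require Import Defs.
From HB Require Import structures.
From mathcomp Require Import all_boot all_order all_algebra.
From mathcomp Require Import reals.
From mathcomp.real_closed Require Import complex mxtens.
Set Implicit Arguments. Unset Strict Implicit. Unset Printing Implicit Defensive.
Import Order.TTheory GRing.Theory Num.Theory.
Local Open Scope ring_scope.

Section StarAlgebra.
Variables (C : numClosedFieldType) (n : nat).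
Local Notation M := 'M[C]_n.

Lemma adjmxK (A : M) : adjmx (adjmx A) = A.
Proof. by apply/matrixP => i j; rewrite !mxE conjCK. Qed.

Lemma adjmxM (A B : M) : adjmx (A *m B) = adjmx B *m adjmx A.
Proof. by rewrite /adjmx trmx_mul map_mxM. Qed.

Lemma adjmx1 : adjmx (1%:M : M) = 1%:M.
Proof. by rewrite /adjmx trmx1 map_mx1. Qed.

Lemma adjmxD (A B : M) : adjmx (A + B) = adjmx A + adjmx B.
Proof. by apply/matrixP => i j; rewrite !mxE rmorphD. Qed.

Lemma adjmxZ (c : C) (A : M) : adjmx (c *: A) = c^* *: adjmx A.
Proof. by apply/matrixP => i j; rewrite !mxE rmorphM. Qed.

Lemma adjmx0 : adjmx (0 : M) = 0.
Proof. by apply/matrixP => i j; rewrite !mxE rmorph0. Qed.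

Lemma alg_gen (S : mxset C n) A : S A -> alg S A.
Proof. by move=> SA T _; apply. Qed.

Lemma alg_star (S : mxset C n) : is_star_alg (alg S).
Proof.
split; [split; [|split]|split].
- by move=> T [[T0 _] _] _.
- move=> A B HA HB T HT HS; have [[_ [TD _]] _] := HT.
  by apply: TD; [apply: HA|apply: HB].
- by move=> c A HA T HT HS; have [[_ [_ TZ]] _] := HT; apply: TZ; apply: HA.
- move=> A B HA HB T HT HS; have [_ [TM _]] := HT.
  by apply: TM; [apply: HA|apply: HB].
- by move=> A HA T HT HS; have [_ [_ TA]] := HT; apply: TA; apply: HA.
Qed.

(* An operator commuting with every X in S and with its adjoint commutes
   with the whole *-algebra generated by S: such X form a *-algebra. *)
Lemma alg_commutant (S : mxset C n) (Z : M) :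
  (forall X, S X -> comm_mx Z X /\ comm_mx Z (adjmx X)) ->
  forall X, alg S X -> comm_mx Z X.
Proof.
move=> HS X HX.
pose G (X : M) := comm_mx Z X /\ comm_mx Z (adjmx X).
have Gstar : is_star_alg G.
  split; [split; [|split]|split].
  - by rewrite /G adjmx0; split; apply: comm_mx0.
  - by move=> A B [hA hA'] [hB hB']; rewrite /G adjmxD; split; apply: comm_mxD.
  - move=> c A [hA hA']; rewrite /G adjmxZ /comm_mx.
    by rewrite -!scalemxAr -!scalemxAl hA hA'.
  - by move=> A B [hA hA'] [hB hB']; rewrite /G adjmxM; split; apply: comm_mxM.
  - by move=> A [hA hA']; rewrite /G adjmxK.
by have [] := HX G Gstar HS.
Qed.

Lemma scalar_of_comm (Z : M) : (forall X : M, comm_mx Z X) -> exists c, Z = c%:M.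
Proof.
case: n Z => [|m] Z H; first by exists 0; apply/matrixP => [[]].
exists (Z 0 0); apply/matrixP => a b; rewrite !mxE -mulr_natr.
(* Entry (p, q) of  Z E_xy = E_xy Z,  E_xy a matrix unit. *)
have key x y p q : Z p x * (y == q)%:R = (p == x)%:R * Z y q.
  have := congr1 (fun X : 'M[C]_m.+1 => X p q) (H (delta_mx x y)).
  rewrite !mxE (bigD1 x) //= big1 ?addr0; last first.
    by move=> j /negPf nj; rewrite !mxE nj mulr0.
  rewrite (bigD1 y) //= big1 ?addr0; last first.
    by move=> j /negPf nj; rewrite !mxE nj andbF mul0r.
  by rewrite !mxE !eqxx /= ?andbT eq_sym.
have [<-|nab] := eqVneq a b.
  by have := key 0 a 0 a; rewrite !eqxx !mulr_natr !mulr_natl !mulr1n => ->.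
by have := key b b a b; rewrite eqxx (negPf nab) !mulr_natr !mulr_natl mulr1n !mulr0n => ->.
Qed.

Lemma full_commutant_scalar (S : mxset C n) (Z : M) : is_full (alg S) ->
  (forall X, S X -> comm_mx Z X /\ comm_mx Z (adjmx X)) -> exists c, Z = c%:M.
Proof.
by move=> HS HZ; apply: scalar_of_comm => X; apply: (alg_commutant HZ).
Qed.

End StarAlgebra.

Section PositiveDefinite.
Variables (C : numClosedFieldType) (n : nat).
Local Notation M := 'M[C]_n.

Definition qf (P : M) (w : 'cV[C]_n) : C := (map_mx Num.conj w^T *m P *m w) 0 0.

Lemma qf_ge0 (P : M) w : posdef P -> 0 <= qf P w.
Proof.
move=> [_ HP]; have [->|nz] := eqVneq w 0; first by rewrite /qf mulmx0 mxE.
exact: ltW (HP _ nz).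
Qed.

Lemma tr_adj (P X : M) : \tr (adjmx X *m P *m X) = \sum_i qf P (col i X).
Proof.
apply: eq_bigr => i _; rewrite /qf !mxE; apply: eq_bigr => j _; rewrite !mxE.
by congr (_ * _); apply: eq_bigr => k _; rewrite !mxE.
Qed.

Lemma tr_adj_ge0 (P X : M) : posdef P -> 0 <= \tr (adjmx X *m P *m X).
Proof. by move=> HP; rewrite tr_adj; apply: sumr_ge0 => i _; apply: qf_ge0. Qed.

Lemma tr_adj_eq0 (P X : M) : posdef P -> \tr (adjmx X *m P *m X) = 0 -> X = 0.
Proof.
move=> HP; rewrite tr_adj => /eqP; rewrite psumr_eq0 => [/allP H|i _]; last exact: qf_ge0.
apply/matrixP => a b.
have qf0 : qf P (col b X) == 0 by have := H b (mem_index_enum _).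
have [z|nz] := eqVneq (col b X) 0.
  by have := congr1 (fun v : 'cV[C]_n => v a 0) z; rewrite !mxE.
by move: (HP.2 _ nz); rewrite lt0r -/(qf P _) qf0.
Qed.

(* Uniqueness for the Sylvester equation P D + D P = 0, P positive definite:
   tr(D^dagger P D) = - tr(D P D^dagger), both sides being nonnegative. *)
Lemma sylvester (P D : M) : posdef P -> P *m D + D *m P = 0 -> D = 0.
Proof.
move=> HP H.
have HPD : P *m D = - (D *m P) by apply/eqP; rewrite -subr_eq0 opprK H.
have e1 : \tr (adjmx D *m P *m D) = - \tr (adjmx (adjmx D) *m P *m adjmx D).
  rewrite adjmxK -mulmxA HPD mulmxN mulmxA linearN /= mxtrace_mulC.
  congr (- _); rewrite [LHS]mxtrace_mulC -mulmxA [LHS]mxtrace_mulC.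
  by rewrite (mxtrace_mulC P) -mulmxA (mxtrace_mulC (adjmx D)) -mulmxA.
apply: (tr_adj_eq0 HP); apply/eqP.
have : \tr (adjmx D *m P *m D) + \tr (adjmx (adjmx D) *m P *m adjmx D) == 0.
  by rewrite e1 addNr.
by rewrite paddr_eq0 ?tr_adj_ge0 // => /andP[].
Qed.

(* Whatever commutes with P^2 commutes with the positive definite P:
   D := Z P - P Z solves the Sylvester equation for P. *)
Lemma comm_sqrt (P Z : M) : posdef P -> comm_mx Z (P *m P) -> comm_mx Z P.
Proof.
move=> HP H; apply/eqP; rewrite -subr_eq0; apply/eqP; apply: (sylvester HP).
rewrite mulmxBr mulmxBl !mulmxA -H -!mulmxA [P *m (Z *m P)]mulmxA.
by rewrite addrC addrA subrK subrr.
Qed.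

Lemma posdef_unit (P : M) : posdef P -> P \in unitmx.
Proof.
move=> HP; rewrite -row_free_unit -kermx_eq0; apply/negPn/negP => nz.
have [i Hi] : exists i, row i (kermx P) != 0.
  apply/existsP; move: nz; apply: contraR; rewrite negb_exists => /forallP H.
  by apply/eqP/row_matrixP => i; rewrite row0; apply/eqP/negPn/H.
set v := row i (kermx P) in Hi.
have vP : v *m P = 0 by rewrite /v -row_mul mulmx_ker row0.
set w : 'cV[C]_n := map_mx Num.conj v^T.
have wnz : w != 0.
  move: Hi; apply: contra => /eqP wz; apply/eqP/matrixP => a b.
  by have := congr1 (fun u : 'cV[C]_n => (u b a)^*) wz; rewrite !mxE conjCK rmorph0.
have := HP.2 _ wnz.
have -> : map_mx Num.conj w^T = v by apply/matrixP => a b; rewrite !mxE conjCK.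
by rewrite vP mul0mx mxE ltxx.
Qed.

Lemma posdef_neq0 (P : M) : posdef P -> (0 < n)%N -> P != 0.
Proof.
move=> HP n0; apply/eqP => P0.
have wnz : (const_mx 1 : 'cV[C]_n) != 0.
  by apply/eqP => /matrixP/(_ (Ordinal n0) 0); rewrite !mxE => /eqP; rewrite oner_eq0.
by have := HP.2 _ wnz; rewrite P0 mulmx0 mul0mx mxE ltxx.
Qed.

Lemma comm_inv (Z A : M) : A \in unitmx -> comm_mx Z A -> comm_mx Z (invmx A).
Proof.
move=> uA H; rewrite /comm_mx.
rewrite -{1}[Z *m invmx A](mulKmx uA) [A *m (Z *m _)]mulmxA -H.
by rewrite -[Z *m A *m _]mulmxA mulmxV // mulmx1.
Qed.

(* The commutant of {alg(sq V sq), rho} is trivial when alg V = B(H) and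
   sq = rho^{-1/2}: Z commutes with sq, hence with V and its adjoints. *)
Lemma Dinv_commutant_scalar (V : mxset C n) (rho sq Z : M) :
  is_full (alg V) -> posdef rho -> posdef sq -> sq *m sq = invmx rho ->
  (forall X, alg (Dinv sq V) X -> comm_mx Z X) -> comm_mx Z rho ->
  exists c, Z = c%:M.
Proof.
move=> HV Hrho Hsq Hsq2 HZA HZr.
have usq := posdef_unit Hsq.
have cZsq : comm_mx Z sq.
  by apply: comm_sqrt => //; rewrite Hsq2; apply: comm_inv (posdef_unit Hrho) HZr.
have cZisq := comm_inv usq cZsq.
have unconj W : W = invmx sq *m (sq *m W *m sq) *m invmx sq.
  by rewrite mulmxA (mulKmx usq) (mulmxK usq).
have adj_conj X : adjmx (sq *m X *m sq) = sq *m adjmx X *m sq.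
  by rewrite !adjmxM Hsq.1 mulmxA.
apply: (full_commutant_scalar HV) => X VX.
have AX : alg (Dinv sq V) (sq *m X *m sq) by apply: alg_gen; exists X.
have [_ [_ A_adj]] := alg_star (Dinv sq V).
split; [rewrite (unconj X) | rewrite (unconj (adjmx X)) -adj_conj].
  by apply: comm_mxM; [apply: comm_mxM|] => //; apply: HZA.
by apply: comm_mxM; [apply: comm_mxM|] => //; apply: HZA; apply: A_adj.
Qed.

End PositiveDefinite.

Section TensorBlocks.
Variable C : numClosedFieldType.

Lemma size0_mx m p (A : 'M[C]_(m, p)) : (m = 0 \/ p = 0)%N -> A = 0.
Proof.
by move=> H; apply/matrixP => [[i Hi] [j Hj]]; exfalso; case: H => H; rewrite H in Hi Hj.
Qed.

Lemma scalar_mx_inj m (a b : C) : (0 < m)%N -> (a%:M : 'M[C]_m) = b%:M -> a = b.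
Proof. by move=> m0 /matrixP /(_ (Ordinal m0) (Ordinal m0)); rewrite !mxE eqxx !mulr1n. Qed.

Lemma tens_scalar m p (a b : C) : (a%:M : 'M_m) *t (b%:M : 'M_p) = (a * b)%:M.
Proof.
apply/matrixP => u v.
case: (mxtens_indexP u) => i j; case: (mxtens_indexP v) => k l.
rewrite tensmxE !mxE (can_eq (@mxtens_indexK m p)) xpair_eqE.
by case: (i == k); case: (j == l); rewrite /= ?mulr1n ?mulr0n ?mulr0 ?mul0r.
Qed.

Lemma tens1_inj m p (X Y : 'M[C]_p) : (0 < m)%N ->
  (1%:M : 'M[C]_m) *t X = 1%:M *t Y -> X = Y.
Proof.
move=> m0 H; apply/matrixP => a b.
have := congr1 (fun Z : 'M[C]_(m * p) =>
  Z (mxtens_index (Ordinal m0, a)) (mxtens_index (Ordinal m0, b))) H.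
by rewrite /= !tensmxE !mxE eqxx !mul1r.
Qed.

(* With a one-dimensional (or empty) tensor factor every matrix is of the
   form B (x) 1, B being the partial trace over that factor. *)
Lemma block_tens1 s f (A : 'M[C]_(s * f)) : (s * f = 0 \/ f = 1)%N ->
  A = (\matrix_(a, b) \sum_(x < f) A (mxtens_index (a, x)) (mxtens_index (b, x)))
      *t 1%:M.
Proof.
case=> [H|H].
  by rewrite [LHS](size0_mx _ (or_introl H)) [RHS](size0_mx _ (or_introl H)).
have ord_eq (x y : 'I_f) : y = x.
  have val0 (z : 'I_f) : val z = 0%N.
    by apply/eqP; rewrite -leqn0 -ltnS -[X in (_ < X)%N]H ltn_ord.
  by apply: val_inj; rewrite !val0.
apply/matrixP => u v.
case: (mxtens_indexP u) => a x; case: (mxtens_indexP v) => b y.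
rewrite (ord_eq x y) tensmxE !mxE eqxx mulr1 (big_pred1 x) // => z.
by rewrite (ord_eq x z) /= eqxx.
Qed.

Lemma mul_mxdiag k (p_ : 'I_k -> nat) (B B' : forall l, 'M[C]_(p_ l)) :
  mxdiag B *m mxdiag B' = mxdiag (fun l => B l *m B' l).
Proof.
rewrite {2}/mxdiag mul_mxdiag_mxblock /mxdiag; apply: eq_mxblock => i j.
by case: eqVneq => [<-|_]; rewrite ?mulmx0 // !conform_mx_id.
Qed.

Lemma castmxM m m' (e : m = m') (A B : 'M[C]_m) :
  castmx (e, e) A *m castmx (e, e) B = castmx (e, e) (A *m B).
Proof. by case: m' / e. Qed.

Lemma castmx_scalar m m' (e : m = m') (a : C) : castmx (e, e) (a%:M : 'M[C]_m) = a%:M.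
Proof. by case: m' / e. Qed.

Lemma castmx0 m m' (e : m = m') : castmx (e, e) (0 : 'M[C]_m) = 0.
Proof. by case: m' / e. Qed.

End TensorBlocks.

Section BlockOperators.
Variables (C : numClosedFieldType) (n k : nat) (s f : 'I_k -> nat) (r : nat).
Variable E : (\sum_(l < k) s l * f l + r = n)%N.
Variable U : 'M[C]_n.
Hypothesis HU : Defs.unitarymx U.

Definition blockop (B : forall l, 'M[C]_(s l)) (T : forall l, 'M[C]_(f l))
    (d : 'M[C]_r) : 'M[C]_n :=
  U *m castmx (E, E) (block_mx (mxdiag (fun l => B l *t T l)) 0 0 d) *m adjmx U.

Lemma wblock_blockop B T : wblock E U B T = blockop B T 0.
Proof. by []. Qed.

Lemma blockopM B T d B' T' d' :
  blockop B T d *m blockop B' T' d' =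
  blockop (fun l => B l *m B' l) (fun l => T l *m T' l) (d *m d').
Proof.
rewrite /blockop !mulmxA -[U *m _ *m adjmx U *m U]mulmxA HU.2 mulmx1.
rewrite -[U *m _ *m castmx _ _]mulmxA castmxM; congr (_ *m castmx _ _ *m _).
rewrite mulmx_block !mulmx0 !mul0mx !addr0 !add0r mul_mxdiag.
by congr block_mx; apply: eq_mxdiag => l; rewrite tensmx_mul.
Qed.

Lemma eq_blockop B T d B' T' d' :
  (forall l, B l *t T l = B' l *t T' l) -> d = d' -> blockop B T d = blockop B' T' d'.
Proof. by move=> H ->; rewrite /blockop (eq_mxdiag H). Qed.

Lemma blockop_comm B T d B' T' d' :
  (forall l, comm_mx (B l) (B' l)) -> (forall l, comm_mx (T l) (T' l)) -> comm_mx d d' ->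
  comm_mx (blockop B T d) (blockop B' T' d').
Proof.
by move=> HB HT Hd; rewrite /comm_mx !blockopM; apply: eq_blockop => [l|]; rewrite ?HB ?HT.
Qed.

Lemma blockop_inj B T d B' T' d' : blockop B T d = blockop B' T' d' ->
  (forall l, B l *t T l = B' l *t T' l) /\ d = d'.
Proof.
have unconj X : adjmx U *m (U *m X *m adjmx U) *m U = X.
  by rewrite !mulmxA HU.2 mul1mx -mulmxA HU.2 mulmx1.
move=> /(congr1 (fun X => adjmx U *m X *m U)); rewrite /= !unconj.
move=> /(congr1 (castmx (esym E, esym E))); rewrite !castmxK.
by case/eq_block_mx => /eq_mxdiagP H _ _ ->.
Qed.

Lemma blockop_scalar (mu : C) : mu%:M = blockop (fun l => 1%:M) (fun l => mu%:M) mu%:M.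
Proof.
rewrite /blockop (eq_mxdiag (fun l => tens_scalar _ _ 1 mu)) mul1r mxdiagZ.
by rewrite -scalar_mx_block castmx_scalar mul_mx_scalar -scalemxAl HU.1 scalemx1.
Qed.

Lemma blockop_zero B T : (forall l, B l *t T l = 0) -> blockop B T 0 = 0.
Proof.
move=> H; rewrite /blockop (eq_mxdiag H) mxdiag0 block_mx0.
by rewrite castmx0 mulmx0 mul0mx.
Qed.

Section ScalarCommutant.
Variable tF : forall l, 'M[C]_(f l).
Hypothesis commutant_scalar : forall c d, (forall l, comm_mx (c l) (tF l)) ->
  exists mu, blockop (fun l => 1%:M) c d = mu%:M.

Definition at_block (l0 : 'I_k) (X : forall l, 'M[C]_(f l)) l : 'M[C]_(f l) :=
  if l == l0 then X l else 0.

Lemma at_block_comm l0 X : comm_mx (X l0) (tF l0) ->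
  forall l, comm_mx (at_block l0 X l) (tF l).
Proof.
by move=> H l; rewrite /at_block; case: eqVneq => [->|_] //; apply/comm_mx_sym/comm_mx0.
Qed.

Lemma commutant_blocks_scalar (c : forall l, 'M[C]_(f l)) (d : 'M[C]_r) :
  (forall l, comm_mx (c l) (tF l)) ->
  exists mu, (forall l, (0 < s l)%N -> c l = mu%:M) /\ d = mu%:M.
Proof.
move=> Hc; have [mu] := commutant_scalar d Hc.
rewrite (blockop_scalar mu) => /blockop_inj [Hl Hd].
by exists mu; split=> // l sl; apply: tens1_inj sl (Hl l).
Qed.

Lemma zero_neq1 m : (0 < m)%N -> (0 : 'M[C]_m) != 1%:M.
Proof.
by move=> m0; apply/eqP => /matrixP/(_ (Ordinal m0) (Ordinal m0)) /eqP;
  rewrite !mxE eqxx eq_sym oner_eq0.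
Qed.

Lemma commutant_remainder : (0 < r)%N -> forall l, (s l * f l = 0)%N.
Proof.
move=> r_gt0 l.
have [mu [Hl /(scalar_mx_inj r_gt0) mu1]] :=
  commutant_blocks_scalar (c := fun l => 0) 1%:M (fun l => comm_mx_sym (comm_mx0 _)).
case: (posnP (s l)) => [->//|sl]; case: (posnP (f l)) => [->|fl]; first by rewrite muln0.
by have := Hl l sl; rewrite -mu1 => /eqP; rewrite (negPf (zero_neq1 fl)).
Qed.

(* If dim H_{F,l} >= 2, then tau_{F,l} is scalar and the rank-one
   projection onto the first basis vector, which commutes with it, is not. *)
Lemma commutant_multiplicity l : (s l * f l = 0 \/ f l = 1)%N.
Proof.
case: (posnP (s l)) => [->|sl]; first by left.
case: (ltngtP (f l) 1) => [|fl2|]; [|exfalso|by right].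
  by rewrite ltnS leqn0 => /eqP ->; left; rewrite muln0.
have [mu [Hl _]] := commutant_blocks_scalar 0 (at_block_comm (comm_mx_refl (tF l))).
have tFl : tF l = mu%:M by have := Hl l sl; rewrite /at_block eqxx.
have pid_comm : comm_mx (pid_mx 1) (tF l) by rewrite tFl; apply: comm_mx_scalar.
have [nu [Hl' _]] :=
  commutant_blocks_scalar 0 (at_block_comm (X := fun l => pid_mx 1) pid_comm).
have := Hl' l sl; rewrite /at_block eqxx => /matrixP H.
have fl0 : (0 < f l)%N by apply: ltnW.
move: (H (Ordinal fl0) (Ordinal fl0)) (H (Ordinal fl2) (Ordinal fl2)).
by rewrite !mxE /= !mulr1n => <- /eqP; rewrite eq_sym oner_eq0.
Qed.

(* Two nonempty blocks l1 != l2 would make the projection onto block l1 scalar. *)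
Lemma commutant_single_block l1 l2 : l1 != l2 ->
  (s l1 * f l1 = 0 \/ s l2 * f l2 = 0)%N.
Proof.
move=> l12; case: (posnP (s l1 * f l1)) => [->|p1]; first by left.
case: (posnP (s l2 * f l2)) => [->|p2]; first by right.
move: p1 p2; rewrite !muln_gt0 => /andP[s1 f1] /andP[s2 f2]; exfalso.
have one_comm : comm_mx (1%:M : 'M[C]_(f l1)) (tF l1) by apply: comm_scalar_mx.
have [mu [Hl _]] :=
  commutant_blocks_scalar 0 (at_block_comm (X := fun l => 1%:M) one_comm).
have := Hl l1 s1; rewrite /at_block eqxx => /(scalar_mx_inj f1) mu1.
have := Hl l2 s2; rewrite /at_block eq_sym (negPf l12) -mu1 => /eqP.
by rewrite (negPf (zero_neq1 f2)).
Qed.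

End ScalarCommutant.

End BlockOperators.

Lemma wblock_surj (C : numClosedFieldType) n k (s f : 'I_k -> nat)
    (E : (\sum_(l < k) s l * f l + 0 = n)%N) (U : 'M[C]_n) :
  Defs.unitarymx U ->
  (forall l, s l * f l = 0 \/ f l = 1)%N ->
  (forall l1 l2, l1 != l2 -> s l1 * f l1 = 0 \/ s l2 * f l2 = 0)%N ->
  forall X : 'M[C]_n, exists B, X = wblock E U B (fun l => 1%:M).
Proof.
move=> HU mult1 single X.
set N := castmx (esym E, esym E) (adjmx U *m X *m U).
have HX : X = U *m castmx (E, E) N *m adjmx U.
  by rewrite /N castmxKV !mulmxA HU.1 mul1mx -mulmxA HU.1 mulmx1.
set Q := ulsubmx N.
exists (fun l => \matrix_(a, b) \sum_(x < f l)
   submxblock Q l l (mxtens_index (a, x)) (mxtens_index (b, x))).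
rewrite HX /wblock; congr (_ *m castmx _ _ *m _).
rewrite -[N]submxK (size0_mx (ursubmx N) (or_intror erefl)).
rewrite (size0_mx (dlsubmx N) (or_introl erefl)) (size0_mx (drsubmx N) (or_introl erefl)).
congr block_mx; rewrite -/Q -[Q]submxblockK /mxdiag; apply: eq_mxblock => i j.
case: eqVneq => [<-|nij]; last by apply: size0_mx; apply: single.
by rewrite conform_mx_id submxblockK; apply: block_tens1.
Qed.

(* The full algebra is compatible with every operator, through the trivial
   decomposition H = H (x) C. *)
Lemma full_compatible (C : numClosedFieldType) n (S : mxset C n) (rho : 'M[C]_n) :
  is_full S -> compatible rho S.
Proof.
move=> HS.
have E : (\sum_(l < 1) n * 1 + 0 = n)%N by rewrite big_ord1 muln1 addn0.
have HU : Defs.unitarymx (1%:M : 'M[C]_n) by rewrite /Defs.unitarymx adjmx1 mul1mx.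
have surj := wblock_surj E HU (fun l => or_intror erefl)
  (fun l1 l2 => ltac:(by rewrite [l1]ord1 [l2]ord1 eqxx)).
exists 1%N, (fun _ => n), (fun _ => 1%N), 0%N, E, 1%:M; split.
  by split=> // X; split=> // _; apply: HS.
by have [B ->] := surj rho; exists B, (fun _ => 1%:M).
Qed.

(* Compatibility forces triviality: block operators commuting with the
   decomposition of alg(sq V sq) and of rho are scalar, so the decomposition
   has the shape required by wblock_surj. *)
Lemma compatible_full (C : numClosedFieldType) n (V : mxset C n) (rho sq : 'M[C]_n) :
  is_full (alg V) -> posdef rho -> posdef sq -> sq *m sq = invmx rho ->
  compatible rho (alg (Dinv sq V)) -> is_full (alg (Dinv sq V)).
Proof.
move=> HV Hrho Hsq Hsq2 [k [s [f [r [E [U [[HU HA] [rS [tF Hrho_blocks]]]]]]]]].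
have commutant_scalar c d : (forall l, comm_mx (c l) (tF l)) ->
    exists mu, blockop E U (fun l => 1%:M) c d = mu%:M.
  move=> Hc; apply: (Dinv_commutant_scalar HV Hrho Hsq Hsq2).
    move=> X /HA [B ->]; rewrite wblock_blockop.
    by apply: (blockop_comm E HU) => [l|l|];
      [apply: comm_scalar_mx|apply: comm_mx1|apply: comm_mx0].
  rewrite Hrho_blocks wblock_blockop.
  by apply: (blockop_comm E HU) => [l|l|];
    [apply: comm_scalar_mx|apply: Hc|apply: comm_mx0].
have r0 : r = 0%N.
  case: (posnP r) => // r_gt0; exfalso.
  have n_gt0 : (0 < n)%N by rewrite -E addn_gt0 r_gt0 orbT.
  have := posdef_neq0 Hrho n_gt0.
  rewrite Hrho_blocks wblock_blockop blockop_zero ?eqxx // => l.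
  by apply: size0_mx; left; exact: (commutant_remainder HU commutant_scalar r_gt0 l).
subst r => X.
have [B ->] := wblock_surj E HU (commutant_multiplicity HU commutant_scalar)
  (commutant_single_block HU commutant_scalar) X.
by apply/HA; exists B.
Qed.

Theorem mainTheorem5 (R : realType) (n : nat) (V : mxset R[i] n)
  (rho sq : 'M[R[i]]_n) :
  is_subspace V -> is_full (alg V) ->
  posdef rho ->
  (* sq = rho^{-1/2}: the positive definite square root of rho^{-1} *)
  posdef sq -> sq *m sq = invmx rho ->
  (compatible rho (alg (Dinv sq V)) <-> is_full (alg (Dinv sq V))).
Proof.
move=> _ HV Hrho Hsq Hsq2; split; first exact: compatible_full.
exact: full_compatible.
Qed.
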